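(* Let $q$ be a power of $3$, and pick $a,b,c,d,e\in\mathbb{F}_q$ with $e\ne 0$. Then $\varphi\colon (x,y)\mapsto (x^3-exy^2-ax-by,\, y^3-cx-dy)$ permutes $\mathbb{F}_q\times\mathbb{F}_q$ if and only if $c=0$, $d$ is either zero or a nonsquare in $\mathbb{F}_q$, and one of the following holds: (i) $a=0$ and $e$ is a nonsquare in $\mathbb{F}_q$; or (ii) $q=3$, $a=-1$, and $e=1$. *)

From HB Require Import structures.
From mathcomp Require Import all_boot all_order all_algebra all_field.
Set Implicit Arguments. Unset Strict Implicit. Unset Printing Implicit Defensive.
Import GRing.Theory.
Local Open Scope ring_scope.

Definition is_square (F : fieldType) (x : F) : Prop := exists y : F, y ^+ 2 = x.

Definition phi_map (F : fieldType) (a b c d e : F) (p : F * F) : F * F :=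
  let: (x, y) := p in
  (x ^+ 3 - e * x * y ^+ 2 - a * x - b * y, y ^+ 3 - c * x - d * y).

From HB Require Import structures.
From mathcomp Require Import all_boot all_order all_algebra all_field.
From mathcomp Require Import ring.
Set Implicit Arguments.
Unset Strict Implicit.
Unset Printing Implicit Defensive.
Import GRing.Theory.
Local Open Scope ring_scope.

(* In characteristic 3 the map t |-> t^3 - k t is additive, so it is injective
   exactly when k is zero or a nonsquare.  As the first coordinate of phi is
   (x^3 - (a + e y^2) x) - b y, phi is bijective iff c = 0 and d, as well as
   every a + e y^2, is zero or a nonsquare.
   If e = w^2, then a + (r - a/r)^2 = (r + a/r)^2 forces r^2 = -a for all
   r <> 0, so F = {0, 1, -1}.  If e is a nonsquare and a <> 0, then a = e m^2
   because the nonsquares form a single coset of the nonzero squares; hence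
   every m^2 + y^2 is a square, the squares are closed under addition, and
   t = (t+1)^2 + (t-1)^2 + (t-1)^2 makes every element a square. *)

Definition zero_or_nonsquare {F : fieldType} (k : F) : Prop :=
  k = 0 \/ ~ is_square k.

Section FieldSquares.
Variable F : fieldType.
Implicit Types k s : F.

Lemma zero_or_nonsquare_sqr s : zero_or_nonsquare (s ^+ 2) -> s = 0.
Proof. by case=> [/eqP | sN]; [rewrite sqrf_eq0 => /eqP | case: sN; exists s]. Qed.

Lemma zero_or_nonsquareP k :
  zero_or_nonsquare k <-> (forall t, t ^+ 3 = k * t -> t = 0).
Proof.
split=> [[-> t /eqP | kN t kt] | ker].
- by rewrite mul0r expf_eq0 => /andP[_ /eqP].
- apply/eqP; apply: contraT => t0; case: kN; exists t.
  by apply: (mulfI t0); rewrite -exprS kt mulrC.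
- have [|k0] := eqVneq k 0; [by left | right => -[s sk]].
  have s0 : s != 0 by apply: contraNneq k0 => s0; rewrite -sk s0 expr0n.
  by move/eqP: s0; apply; apply: ker; rewrite -sk exprS mulrC.
Qed.

End FieldSquares.

Section CharThree.
Variables (F : fieldType) (pchar3 : 3%N \in [pchar F]).
Let three0 : 3%:R = 0 :> F := pcharf0 pchar3.

Lemma oner_neq_m1 : (1 : F) != -1.
Proof. by rewrite -addr_eq0 -mulr2n -(dvdn_pcharf pchar3). Qed.

Lemma cube_sub_inj (k : F) :
  zero_or_nonsquare k -> injective (fun t : F => t ^+ 3 - k * t).
Proof.
move=> /zero_or_nonsquareP ker x y /eqP; rewrite -subr_eq0.
have cubeB : (x - y) ^+ 3 = x ^+ 3 - y ^+ 3 := rmorphB (pFrobenius_aut pchar3) x y.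
have -> : x ^+ 3 - k * x - (y ^+ 3 - k * y) = (x - y) ^+ 3 - k * (x - y).
  by rewrite cubeB; ring.
by rewrite subr_eq0 => /eqP/ker/eqP; rewrite subr_eq0 => /eqP.
Qed.

Lemma sqr_eq_opp_of_zero_or_nonsquare (a : F) :
  (forall z, zero_or_nonsquare (a + z ^+ 2)) -> forall r, r != 0 -> r ^+ 2 = - a.
Proof.
move=> zns r r0.
have sqrD : a + (r - a / r) ^+ 2 = (r + a / r) ^+ 2.
  have -> : a + (r - a / r) ^+ 2 = (r + a / r) ^+ 2 - 3%:R * a by field.
  by rewrite three0 mul0r subr0.
have := zns (r - a / r); rewrite sqrD => /zero_or_nonsquare_sqr ra0.
have : r ^+ 2 + a = r * (r + a / r) by field.
by rewrite ra0 mulr0 => /eqP; rewrite addr_eq0 => /eqP.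
Qed.

Lemma all_squares_of_sqrD (m : F) :
  m != 0 -> (forall y, is_square (m ^+ 2 + y ^+ 2)) -> forall t : F, is_square t.
Proof.
move=> m0 sq.
have sqrD u v : is_square (u ^+ 2 + v ^+ 2 : F).
  have [->|u0] := eqVneq u 0; first by exists v; rewrite expr0n add0r.
  have [s hs] := sq (v * m / u); exists (s * u / m).
  by rewrite !expr_div_n !exprMn hs; field; rewrite u0 m0.
move=> t; have [s hs] := sqrD (t + 1) (t - 1); have [r hr] := sqrD s (t - 1).
exists r; rewrite hr hs.
have -> : (t + 1) ^+ 2 + (t - 1) ^+ 2 + (t - 1) ^+ 2 = t + 3%:R * (t ^+ 2 - t + 1).
  by ring.
by rewrite three0 mul0r addr0.
Qed.

End CharThree.

Section FiniteFieldSquares.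
Variable F : finFieldType.

Lemma is_squareP (x : F) : reflect (is_square x) (x \in [set y ^+ 2 | y : F]).
Proof. by apply: (iffP imsetP) => [[y _ ->] | [y <-]]; [exists y | exists y]. Qed.

Lemma card_squares : (#|F| < 2 * #|[set y ^+ 2 | y : F]|)%N.
Proof.
set S := [set _ | _ : F].
have fiber u : (#|[set y : F | y ^+ 2 == u]| <= 2)%N.
  case: (pickP (fun y : F => y ^+ 2 == u)) => [r /eqP <- | noroot]; last first.
    by rewrite (_ : [set y | _] = set0) ?cards0 // -setP => y; rewrite !inE noroot.
  apply: leq_trans (_ : #|[set r; - r]| <= 2)%N; last by rewrite cards2 ltnS leq_b1.
  by apply: subset_leq_card; apply/subsetP => y; rewrite !inE eqf_sqr.
have fiber0 : #|[set y : F | y ^+ 2 == 0]| = 1%N.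
  by rewrite -[RHS](cards1 (0 : F)); apply: eq_card => y; rewrite !inE sqrf_eq0.
have S0 : (0 : F) \in S by apply/imsetP; exists 0; rewrite ?expr0n.
rewrite -[#|F|]sum1_card (partition_big_imset (fun y : F => y ^+ 2)) -/S /=.
rewrite (big_setD1 0 S0) /= sum1dep_card fiber0 (cardsD1 0 S) S0 mulnDr muln1.
rewrite ltn_add2l ltnS mulnC -sum_nat_const; apply: leq_sum => u _.
by rewrite sum1dep_card fiber.
Qed.

Lemma is_squareM_nonsquare (u v : F) :
  ~ is_square u -> ~ is_square v -> is_square (u * v).
Proof.
move=> uN vN; set S := [set y ^+ 2 | y : F].
have u0 : u != 0 by apply: contra_notN uN => /eqP ->; exists 0; rewrite expr0n.
have meet0 : S :&: [set u * s | s in S] \subset [set 0].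
  apply/subsetP => _ /setIP[/imsetP[y _ ->] /imsetP[_ /imsetP[z _ ->] yuz]].
  rewrite inE; apply: contraT => y0; case: uN; exists (y / z).
  have z0 : z ^+ 2 != 0 by apply: contraNneq y0 => z0; rewrite yuz z0 mulr0.
  by rewrite expr_div_n yuz mulfK.
have cover : S :|: [set u * s | s in S] = [set: F].
  apply/eqP; rewrite eqEcard subsetT cardsT /=.
  have := cardsUI S [set u * s | s in S]; rewrite card_imset; last exact: mulfI.
  rewrite addnn -mul2n => cardUI; rewrite -ltnS.
  apply: leq_trans card_squares _; rewrite -/S -cardUI -addn1 leq_add2l.
  by rewrite -(cards1 (0 : F)) subset_leq_card.
have : v \in [set: F] by [].
rewrite -cover => /setUP[/is_squareP // | /imsetP[_ /imsetP[z _ ->] ->]].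
by exists (u * z); rewrite exprMn mulrA.
Qed.

End FiniteFieldSquares.

Section FiniteCharThree.
Variables (F : finFieldType) (pchar3 : 3%N \in [pchar F]).

Lemma card_eq3 : #|F| = 3%N <-> forall r : F, r != 0 -> r ^+ 2 = 1.
Proof.
split=> [F3 r r0 | sqr1].
  by apply: (mulfI r0); rewrite -exprS mulr1 -{2}(expf_card r) F3.
have elems : [set: F] = 0 |: (1 |: [set -1]).
  apply/setP => r; rewrite !inE; have [//|r0] := eqVneq r 0.
  by rewrite /= -sqrf_eq1 (sqr1 r r0) eqxx.
rewrite -cardsT elems !cardsU1 cards1 !inE (negbTE (oner_neq_m1 pchar3)).
by rewrite !(eq_sym 0) oner_eq0 oppr_eq0 oner_eq0.
Qed.

Lemma zero_or_nonsquare_quadratic_sqr (a w : F) : w != 0 ->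
  (forall y, zero_or_nonsquare (a + w ^+ 2 * y ^+ 2)) ->
  [/\ #|F| = 3%N, a = -1 & w ^+ 2 = 1].
Proof.
move=> w0 zns.
have {}zns z : zero_or_nonsquare (a + z ^+ 2).
  by have := zns (z / w); rewrite -exprMn mulrCA divff ?mulr1.
have sqr := sqr_eq_opp_of_zero_or_nonsquare pchar3 zns.
have a1 : a = -1 by rewrite -[a]opprK -(sqr 1) ?expr1n ?oner_neq0.
rewrite a1 opprK in sqr; split=> //; [exact/card_eq3 | exact: sqr].
Qed.

Lemma zero_or_nonsquare_quadratic_nonsquare (a e : F) : ~ is_square e ->
  (forall y, zero_or_nonsquare (a + e * y ^+ 2)) -> a = 0.
Proof.
move=> eN zns; have [//|a0] := eqVneq a 0; exfalso.
have e0 : e != 0 by apply: contra_notN eN => /eqP ->; exists 0; rewrite expr0n.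
have aN : ~ is_square a.
  by case: (zns 0); rewrite expr0n mulr0 addr0 // => /eqP; rewrite (negbTE a0).
have [s ae] := is_squareM_nonsquare aN eN.
pose m := s / e.
have am : a = e * m ^+ 2 by rewrite expr_div_n ae; field.
have m0 : m != 0 by apply: contraNneq a0 => m0; rewrite am m0 expr0n mulr0.
suff allsq : forall t : F, is_square t by apply: eN; apply: allsq.
apply: (all_squares_of_sqrD pchar3 m0) => y.
case: (is_squareP (m ^+ 2 + y ^+ 2)) => // sN.
have s0 : m ^+ 2 + y ^+ 2 != 0.
  by apply: contra_notN sN => /eqP ->; exists 0; rewrite expr0n.
case: (zns y) => [|[]].
  by rewrite am -mulrDr => /eqP; rewrite mulf_eq0 (negbTE e0) (negbTE s0).
by rewrite am -mulrDr; apply: is_squareM_nonsquare.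
Qed.

Lemma zero_or_nonsquare_quadratic (a e : F) : e != 0 ->
  (forall y, zero_or_nonsquare (a + e * y ^+ 2)) <->
  (a = 0 /\ ~ is_square e) \/ (#|F| = 3%N /\ a = -1 /\ e = 1).
Proof.
move=> e0; split=> [zns | [[-> eN] y | [F3 [-> ->]] y]].
- case: (is_squareP e) => [[w we] | eN].
    have w0 : w != 0 by apply: contraNneq e0 => w0; rewrite -we w0 expr0n.
    rewrite -we in zns *; have [F3 a1 w1] := zero_or_nonsquare_quadratic_sqr w0 zns.
    by right.
  by left; split=> //; apply: zero_or_nonsquare_quadratic_nonsquare eN zns.
- rewrite add0r; have [->|y0] := eqVneq y 0; first by left; rewrite expr0n mulr0.
  right=> -[s sy]; apply: eN; exists (s / y).
  by rewrite expr_div_n sy mulfK // expf_neq0.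
- have sqr1 := card_eq3.1 F3.
  rewrite mul1r; have [->|y0] := eqVneq y 0; last by left; rewrite sqr1 // addNr.
  right=> -[s]; rewrite expr0n addr0; have [->|s0] := eqVneq s 0.
    by rewrite expr0n => /eqP; rewrite eq_sym oppr_eq0 oner_eq0.
  by rewrite sqr1 // => /eqP; rewrite (negbTE (oner_neq_m1 pchar3)).
Qed.

Lemma phi_map_bijective (a b c d e : F) : e != 0 ->
  bijective (phi_map a b c d e) <->
  [/\ c = 0, zero_or_nonsquare d & forall y, zero_or_nonsquare (a + e * y ^+ 2)].
Proof.
move=> e0; split=> [/bij_inj phi_inj | [c0 /(cube_sub_inj pchar3) d_inj x_inj]].
- have c0 : c = 0.
    apply/eqP; apply: contraT => c0.
    pose t := (1 - d) / c; pose x := (t ^+ 3 - a * t - b) / e - t.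
    suff /phi_inj[_ /eqP] : phi_map a b c d e (x, 0) = phi_map a b c d e (x + t, 1).
      by rewrite eq_sym oner_eq0.
    have cubeD : (x + t) ^+ 3 = x ^+ 3 + t ^+ 3 := rmorphD (pFrobenius_aut pchar3) x t.
    rewrite /phi_map cubeD.
    by congr pair; rewrite /x /t; field; rewrite c0 e0.
  split=> //.
  + apply/zero_or_nonsquareP => t td; have [//|t0] := eqVneq t 0.
    pose x := - b / (e * t).
    have E : phi_map a b c d e (x, 0) = phi_map a b c d e (x, t).
      by rewrite /phi_map c0 td /x; congr pair; [field; rewrite t0 e0 | ring].
    exact: esym (congr1 snd (phi_inj _ _ E)).
  + move=> y; apply/zero_or_nonsquareP => t tk.
    have E : phi_map a b c d e (0, y) = phi_map a b c d e (t, y).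
      by rewrite /phi_map c0; congr pair; rewrite ?tk; ring.
    exact: esym (congr1 fst (phi_inj _ _ E)).
- apply: injF_bij => -[x y] [x' y']; rewrite /phi_map c0 => -[ex ey].
  have yy' : y = y' by apply: d_inj; rewrite /= !mul0r !subr0 in ey *.
  subst y'; congr pair; apply: (cube_sub_inj pchar3 (x_inj y)).
  have first_coord z :
      z ^+ 3 - (a + e * y ^+ 2) * z = z ^+ 3 - e * z * y ^+ 2 - a * z - b * y + b * y.
    by ring.
  by rewrite /= !first_coord ex.
Qed.

End FiniteCharThree.

Theorem theorem1p6 (F : finFieldType) (hchar : 3%N \in [pchar F])
  (a b c d e : F) (he : e != 0) :
  bijective (phi_map a b c d e) <->
  [/\ c = 0, d = 0 \/ ~ is_square d &
      (a = 0 /\ ~ is_square e) \/ (#|F| = 3%N /\ a = -1 /\ e = 1)].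
Proof.
have quadratic := zero_or_nonsquare_quadratic hchar a he.
apply: (iff_trans (phi_map_bijective hchar a b c d he)).
by split=> -[c0 dN /quadratic ae]; split.
Qed.
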